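(* Let $N=\{n_1,\dots,n_m\}$ be a finite validator set ($m\ge 1$) in which validator $n_i$ has staked tokens $s_i>0$. Let $\rho_{\mathbb{N}_L}$ and $\rho_{\mathbb{N}_S}$ be the Nakamoto coefficients for liveness and safety of $N$ under the linear stake-weight model ($w_i=s_i$), and let $\rho^*_{\mathbb{N}_L}$ and $\rho^*_{\mathbb{N}_S}$ be those under the Square Root Stake Weight (SRSW) model ($w^*_i=\sqrt{s_i}$). Then $\rho^*_{\mathbb{N}_L}\ge \rho_{\mathbb{N}_L}$ and $\rho^*_{\mathbb{N}_S}\ge \rho_{\mathbb{N}_S}$.
   Context: Weighted consensus: each validator $n_i$ has a weight $w_i>0$ and $W=\sum_{i=1}^m w_i$. A quorum is $\mathbb{Q}=\tfrac{2}{3}W$. Nakamoto coefficient for liveness: $\mathbb{N}_L=\min\{|L| : L\subseteq N,\ \sum_{i\in L} w_i\ge \tfrac13 W\}$ and $\rho_{\mathbb{N}_L}=100\,\mathbb{N}_L/m$. Nakamoto coefficient for safety: $\mathbb{N}_S=\min\{|S| : S\subseteq N,\ \sum_{i\in S} w_i\ge \mathbb{Q}\}$ and $\rho_{\mathbb{N}_S}=\mathbb{N}_S/m$. In the linear model $w_i=s_i$; in the SRSW model $w_i=\sqrt{s_i}$; the coefficients for a model are computed with that model's weights. *)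

From mathcomp Require Import all_boot all_order all_algebra.
Set Implicit Arguments. Unset Strict Implicit. Unset Printing Implicit Defensive.
Import Order.TTheory GRing.Theory Num.Theory.
Local Open Scope ring_scope.

Definition total_weight (R : realFieldType) (m : nat) (w : 'I_m -> R) : R :=
  \sum_(i < m) w i.

(* Minimum cardinality of a set of validators whose total weight is >= t.
   (The arg min is taken over all subsets; setT is the reference point,
   which satisfies the condition whenever t <= W.) *)
Definition min_card_reaching (R : realFieldType) (m : nat) (w : 'I_m -> R)
  (t : R) : nat :=
  #|[arg min_(S < [set: 'I_m] | t <= \sum_(i in S) w i) #|S| ]|.

Definition NL (R : realFieldType) (m : nat) (w : 'I_m -> R) : nat :=
  min_card_reaching w (total_weight w / 3%:R).

Definition NS (R : realFieldType) (m : nat) (w : 'I_m -> R) : nat :=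
  min_card_reaching w (2%:R * total_weight w / 3%:R).

Definition rho_NL (R : realFieldType) (m : nat) (w : 'I_m -> R) : R :=
  100%:R * (NL w)%:R / m%:R.

Definition rho_NS (R : realFieldType) (m : nat) (w : 'I_m -> R) : R :=
  (NS w)%:R / m%:R.

Definition linear_w (R : rcfType) (m : nat) (s : 'I_m -> R) : 'I_m -> R := s.
Definition srsw_w (R : rcfType) (m : nat) (s : 'I_m -> R) : 'I_m -> R :=
  fun i => Num.sqrt (s i).

From mathcomp Require Import all_boot all_order all_algebra.
From mathcomp Require Import ring lra.
Import Order.TTheory GRing.Theory Num.Theory.
Local Open Scope ring_scope.

(* Take a smallest set S reaching the fraction f of the square-root weight and
   let T be the |S| validators of largest stake. T carries at least as much
   square-root weight as S, and since sqrt x / x decreases, the largest stakes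
   hold a larger share of the linear weight than of the square-root weight:
   T reaches the fraction f of the linear weight with no more members than S. *)

Lemma ler_sum_eq_card (R : numDomainType) (I : finType) (g : I -> R)
    (A B : {set I}) :
  #|A| = #|B| -> (forall a b, a \in A -> b \in B -> g b <= g a) ->
  \sum_(i in B) g i <= \sum_(i in A) g i.
Proof.
move=> eq_card le_BA; have [A0 | A_gt0] := posnP #|A|.
  have B0 : #|B| = 0%N by rewrite -eq_card.
  by move: A0 B0 => /eqP + /eqP; rewrite !cards_eq0 => /eqP-> /eqP->.
rewrite -(ler_pMn2r A_gt0) [in leRHS]eq_card -!sumr_const [leRHS]exchange_big /=.
by apply: ler_sum => a aA; apply: ler_sum => b bB; apply: le_BA.
Qed.

Section MinCardReaching.

Variables (R : realFieldType) (m : nat).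
Implicit Types (w v : 'I_m -> R) (S T : {set 'I_m}).

Lemma total_weight_setT w : total_weight w = \sum_(i in [set: 'I_m]) w i.
Proof. by apply: eq_bigl => i; rewrite inE. Qed.

Lemma total_weight_setC w T :
  total_weight w = \sum_(i in T) w i + \sum_(i in ~: T) w i.
Proof. by rewrite total_weight_setT (big_setID T) setTI setTD. Qed.

Lemma min_card_reaching_le w t S :
  t <= total_weight w -> t <= \sum_(i in S) w i ->
  (min_card_reaching w t <= #|S|)%N.
Proof.
rewrite total_weight_setT => reachT reachS; rewrite /min_card_reaching.
by case: arg_minnP => // S0 _; apply.
Qed.

Lemma min_card_reaching_witness w t :
  t <= total_weight w ->
  exists2 S : {set 'I_m}, t <= \sum_(i in S) w i & #|S| = min_card_reaching w t.
Proof.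
rewrite total_weight_setT => reachT; rewrite /min_card_reaching.
by case: arg_minnP => // S reachS _; exists S.
Qed.

Definition top_set w T := forall i j, i \in T -> j \notin T -> w j <= w i.

(* A set of the right size maximizing the weight is a top set: otherwise
   swapping a lighter member for a heavier outsider would increase it. *)
Lemma exists_top_set w S : exists2 T : {set 'I_m}, #|T| = #|S| & top_set w T.
Proof.
case: (@arg_maxP _ R _ S (fun T => #|T| == #|S|) (fun T => \sum_(i in T) w i)).
  exact: eqxx.
move=> T /eqP cardT maxT; exists T => // i j iT jT.
rewrite leNgt; apply/negP => lt_ij.
have card_swap : #|j |: (T :\ i)| == #|S|.
  by rewrite cardsU1 in_setD1 (negbTE jT) andbF -cardT (cardsD1 i T) iT.
have := maxT _ card_swap.
rewrite big_setU1 ?in_setD1 ?(negbTE jT) ?andbF // (big_setD1 i iT) /= lerD2r.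
by rewrite leNgt lt_ij.
Qed.

Section Flattening.

Variables w v : 'I_m -> R.
Hypothesis v_homo : forall i j, w j <= w i -> v j <= v i.
Hypothesis v_ratio_anti : forall i j, w j <= w i -> v i * w j <= w i * v j.

Lemma top_set_sum_max S T :
  top_set w T -> #|S| = #|T| -> \sum_(i in S) v i <= \sum_(i in T) v i.
Proof.
move=> topT cardST.
rewrite (big_setID (A := S) T) (big_setID (A := T) S) setIC lerD2l.
apply: ler_sum_eq_card => [|a b]; last first.
  by rewrite !inE => /andP[aS aT] /andP[bT bS]; apply/v_homo/topT.
apply/eqP; rewrite -(eqn_add2l #|T :&: S|) cardsID {1}setIC cardsID.
by rewrite cardST.
Qed.

Lemma top_set_share T : top_set w T ->
  (\sum_(i in T) v i) * (\sum_(j in ~: T) w j) <=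
  (\sum_(i in T) w i) * (\sum_(j in ~: T) v j).
Proof.
move=> topT; rewrite !big_distrlr /=.
apply: ler_sum => i iT; apply: ler_sum => j jT.
by apply/v_ratio_anti/topT; rewrite // -in_setC.
Qed.

Lemma top_set_reaching T f :
  top_set w T -> 0 <= total_weight w -> 0 < total_weight v ->
  f * total_weight v <= \sum_(i in T) v i ->
  f * total_weight w <= \sum_(i in T) w i.
Proof.
move=> topT; have := top_set_share T topT.
rewrite (total_weight_setC w T) (total_weight_setC v T).
set a := \sum_(i in T) v i; set b := \sum_(i in ~: T) v i.
set A := \sum_(i in T) w i; set B := \sum_(i in ~: T) w i.
(* Multiply the reach of T for v by A + B and use the share inequality. *)
move=> share wAB vab reach_v.
rewrite -(ler_pM2l vab); nra.
Qed.

Lemma min_card_reaching_flatten f :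
  f <= 1 -> 0 <= total_weight w -> 0 < total_weight v ->
  (min_card_reaching w (f * total_weight w) <=
   min_card_reaching v (f * total_weight v))%N.
Proof.
move=> f_le1 w_ge0 v_gt0.
have [S reachS <-] := @min_card_reaching_witness v _ (ler_piMl (ltW v_gt0) f_le1).
have [T cardT topT] := exists_top_set w S.
rewrite -cardT; apply: min_card_reaching_le; first exact: ler_piMl.
apply: top_set_reaching => //; apply: le_trans reachS _.
exact: top_set_sum_max.
Qed.

End Flattening.

End MinCardReaching.

Lemma sqrtr_mul_le_mul_sqrtr (R : rcfType) (x y : R) :
  0 <= y -> y <= x -> Num.sqrt x * y <= x * Num.sqrt y.
Proof.
move=> y_ge0 le_yx; have x_ge0 := le_trans y_ge0 le_yx.
have le_sqrt : Num.sqrt y <= Num.sqrt x by rewrite ler_sqrt.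
rewrite -{1}(sqr_sqrtr y_ge0) -{2}(sqr_sqrtr x_ge0) -subr_ge0.
have -> : Num.sqrt x ^+ 2 * Num.sqrt y - Num.sqrt x * Num.sqrt y ^+ 2 =
          Num.sqrt x * Num.sqrt y * (Num.sqrt x - Num.sqrt y) by ring.
by rewrite !mulr_ge0 ?sqrtr_ge0 ?subr_ge0.
Qed.

Theorem lemma1 (R : rcfType) (m : nat) (hm : (1 <= m)%N) (s : 'I_m -> R)
  (hs : forall i, 0 < s i) :
  rho_NL (linear_w s) <= rho_NL (srsw_w s) /\
  rho_NS (linear_w s) <= rho_NS (srsw_w s).
Proof.
have s_ge0 i : 0 <= s i by exact: ltW.
have flatten f : f <= 1 ->
    (min_card_reaching (linear_w s) (f * total_weight (linear_w s)) <=
     min_card_reaching (srsw_w s) (f * total_weight (srsw_w s)))%N.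
  move=> f_le1; apply: min_card_reaching_flatten => //.
  - by move=> i j le_ij; rewrite ler_sqrt.
  - by move=> i j le_ij; apply: sqrtr_mul_le_mul_sqrtr.
  - exact: sumr_ge0.
  - rewrite /total_weight /srsw_w (bigD1 (Ordinal hm)) //=.
    by rewrite ltr_pwDl ?sqrtr_gt0 ?sumr_ge0 // => i _; rewrite sqrtr_ge0.
have inv_m_ge0 : 0 <= (m%:R : R)^-1 by rewrite invr_ge0 ler0n.
split.
- rewrite /rho_NL ler_wpM2r // ler_wpM2l ?ler0n // ler_nat /NL.
  rewrite ![total_weight _ / _]mulrC; apply: flatten.
  by rewrite invf_le1 ?ler1n ?ltr0n.
- rewrite /rho_NS ler_wpM2r // ler_nat /NS ![2%:R * _ / _]mulrAC.
  by apply: flatten; rewrite ler_pdivrMr ?ltr0n // mul1r ler_nat.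
Qed.
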